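(* For every nonnegative integer $r$, $$\int_0^{\frac{\pi}{2}}\sin^{2r}x\,\sin\frac{x}{2}\,\mathrm{d}x=\frac{16^r}{(4r+1)\binom{4r}{2r}}\left(2+\sqrt{2}\sum_{k=0}^r \frac{\binom{4k}{2k}}{(4k-1)16^k}\right).$$ *)

From Stdlib Require Import Reals.
From Coquelicot Require Import Coquelicot.

(* Writing J n for the integral of sin^n x * sin (x/2) over [0, pi/2], one
   integration by parts against an explicit antiderivative gives the
   reduction formula (4(n+2)^2 - 1) J (n+2) = 4(n+2)(n+1) J n + sqrt 2, the
   boundary term being 2 cos (pi/4).  The right-hand side of the theorem
   satisfies the same recurrence in steps of two (the ratio of consecutive
   central binomial coefficients C(4r, 2r) is what makes it match), and both
   sides equal 2 - sqrt 2 for r = 0. *)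
From Stdlib Require Import Reals Lra Lia.
From Coquelicot Require Import Coquelicot.
Open Scope R_scope.

Definition sin_pow_sin_half n (x : R) := sin x ^ n * sin (x / 2).

Definition sin_pow_sin_half_integral n := RInt (sin_pow_sin_half n) 0 (PI / 2).

Lemma continuous_sin_pow_sin_half n x : continuous (sin_pow_sin_half n) x.
Proof.
  apply (ex_derive_continuous (V := R_NormedModule)).
  unfold sin_pow_sin_half; auto_derive; auto.
Qed.

Lemma ex_RInt_sin_pow_sin_half n a b : ex_RInt (sin_pow_sin_half n) a b.
Proof.
  apply (ex_RInt_continuous (V := R_CompleteNormedModule)); intros x _.
  apply continuous_sin_pow_sin_half.
Qed.

Lemma cos_PI4_sqrt2 : cos (PI / 4) = sqrt 2 / 2.
Proof.
  rewrite cos_PI4.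
  assert (sqrt2_pos : 0 < sqrt 2) by (apply sqrt_lt_R0; lra).
  assert (sqrt2_sq := sqrt_sqrt 2 ltac:(lra)).
  field_simplify_eq; lra.
Qed.

Lemma sin_pow_sin_half_integral_0 : sin_pow_sin_half_integral 0 = 2 - sqrt 2.
Proof.
  apply is_RInt_unique.
  replace (2 - sqrt 2) with (-2 * cos (PI / 2 / 2) - -2 * cos (0 / 2)).
  - apply (is_RInt_derive (V := R_CompleteNormedModule) (fun x => -2 * cos (x / 2))).
    + intros x _; unfold sin_pow_sin_half; auto_derive; auto; unfold Rdiv; field.
    + intros x _; apply continuous_sin_pow_sin_half.
  - replace (PI / 2 / 2) with (PI / 4) by field.
    rewrite Rdiv_0_l, cos_0, cos_PI4_sqrt2; field.
Qed.

(* The antiderivative behind the reduction formula; the cos x cos (x/2)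
   terms of its derivative cancel exactly because of the coefficient n + 2. *)
Lemma is_derive_sin_pow_sin_half_reduction n x :
  is_derive
    (fun x => sin x ^ S n * (-4 * (INR n + 2) * cos x * sin (x / 2)
                             + 2 * sin x * cos (x / 2))) x
    ((4 * (INR n + 2) ^ 2 - 1) * sin_pow_sin_half (S (S n)) x
     - 4 * (INR n + 2) * (INR n + 1) * sin_pow_sin_half n x).
Proof.
  unfold sin_pow_sin_half; auto_derive; auto.
  change (match n with 0%nat => 1 | S _ => INR n + 1 end) with (INR (S n)).
  rewrite S_INR; cbn [pow]; unfold Rdiv.
  assert (pythagoras := sin2_cos2 x); unfold Rsqr in pythagoras.
  apply Rminus_diag_uniq.
  transitivity (-4 * (INR n + 2) * (INR n + 1) * sin x ^ n * sin (x * / 2)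
                * (sin x * sin x + cos x * cos x - 1)).
  - field.
  - rewrite pythagoras; ring.
Qed.

Lemma sin_pow_sin_half_integral_reduction n :
  (4 * (INR n + 2) ^ 2 - 1) * sin_pow_sin_half_integral (S (S n)) =
  4 * (INR n + 2) * (INR n + 1) * sin_pow_sin_half_integral n + sqrt 2.
Proof.
  set (F := fun x => sin x ^ S n * (-4 * (INR n + 2) * cos x * sin (x / 2)
                                   + 2 * sin x * cos (x / 2))).
  set (a := 4 * (INR n + 2) ^ 2 - 1).
  set (b := 4 * (INR n + 2) * (INR n + 1)).
  set (integrand := fun x => a * sin_pow_sin_half (S (S n)) x
                             - b * sin_pow_sin_half n x).
  assert (by_ftc : is_RInt integrand 0 (PI / 2) (F (PI / 2) - F 0)).
  { apply (is_RInt_derive (V := R_CompleteNormedModule) F).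
    - intros x _; apply is_derive_sin_pow_sin_half_reduction.
    - intros x _; apply (continuous_minus (V := R_NormedModule));
        apply (continuous_scal_r (K := R_AbsRing) (V := R_NormedModule));
        apply continuous_sin_pow_sin_half. }
  assert (by_linearity : is_RInt integrand 0 (PI / 2)
    (a * sin_pow_sin_half_integral (S (S n)) - b * sin_pow_sin_half_integral n)).
  { apply (is_RInt_minus (V := R_NormedModule));
      apply (is_RInt_scal (V := R_NormedModule));
      apply (RInt_correct (V := R_CompleteNormedModule));
      apply ex_RInt_sin_pow_sin_half. }
  assert (F_PI2 : F (PI / 2) = sqrt 2).
  { unfold F; replace (PI / 2 / 2) with (PI / 4) by field.
    rewrite sin_PI2, cos_PI2, pow1, cos_PI4_sqrt2; field. }
  assert (F_0 : F 0 = 0) by (unfold F; rewrite sin_0, pow_i by lia; ring).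
  assert (E := is_RInt_unique _ _ _ _ by_ftc).
  rewrite (is_RInt_unique _ _ _ _ by_linearity), F_PI2, F_0 in E; lra.
Qed.

Lemma binomial_neq_0 n k : Binomial.C n k <> 0.
Proof.
  unfold Binomial.C, Rdiv.
  apply Rmult_integral_contrapositive_currified; [apply INR_fact_neq_0 |].
  apply Rinv_neq_0_compat, Rmult_integral_contrapositive_currified;
    apply INR_fact_neq_0.
Qed.

Lemma central_binomial_succ n :
  Binomial.C (2 * S n) (S n) = 2 * (2 * INR n + 1) / (INR n + 1) * Binomial.C (2 * n) n.
Proof.
  unfold Binomial.C.
  replace (2 * S n - S n)%nat with (S n) by lia.
  replace (2 * n - n)%nat with n by lia.
  replace (2 * S n)%nat with (S (S (2 * n))) by lia.
  rewrite !fact_simpl, !mult_INR, !S_INR, mult_INR.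
  assert (fact_2n := INR_fact_neq_0 (2 * n)).
  assert (fact_n := INR_fact_neq_0 n).
  assert (n_nonneg := pos_INR n).
  simpl INR; field; repeat split; lra.
Qed.

Definition central_binomial_series r :=
  sum_f_R0 (fun k => Binomial.C (4 * k) (2 * k) / ((4 * INR k - 1) * 16 ^ k)) r.

Definition sin_pow_sin_half_closed_form r :=
  16 ^ r / ((4 * INR r + 1) * Binomial.C (4 * r) (2 * r)) *
  (2 + sqrt 2 * central_binomial_series r).

Lemma sin_pow_sin_half_closed_form_0 : sin_pow_sin_half_closed_form 0 = 2 - sqrt 2.
Proof.
  unfold sin_pow_sin_half_closed_form, central_binomial_series; simpl.
  rewrite C_n_n; field.
Qed.

Lemma sin_pow_sin_half_closed_form_reduction m :
  (4 * (INR (2 * m) + 2) ^ 2 - 1) * sin_pow_sin_half_closed_form (S m) =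
  4 * (INR (2 * m) + 2) * (INR (2 * m) + 1) * sin_pow_sin_half_closed_form m + sqrt 2.
Proof.
  unfold sin_pow_sin_half_closed_form, central_binomial_series.
  rewrite tech5.
  replace (4 * S m)%nat with (2 * S (S (2 * m)))%nat by lia.
  replace (2 * S m)%nat with (S (S (2 * m))) by lia.
  replace (4 * m)%nat with (2 * (2 * m))%nat by lia.
  rewrite !central_binomial_succ, !S_INR, !mult_INR.
  assert (binomial_nz := binomial_neq_0 (2 * (2 * m)) (2 * m)).
  assert (m_nonneg := pos_INR m).
  assert (pow16_pos : 0 < 16 ^ m) by (apply pow_lt; lra).
  simpl INR; simpl pow; field; repeat split; nra.
Qed.

Theorem proposition4p0p1 (r : nat) :
  RInt (fun x => (sin x) ^ (2 * r) * sin (x / 2)) 0 (PI / 2) =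
  16 ^ r / ((4 * INR r + 1) * Binomial.C (4 * r) (2 * r)) *
  (2 + sqrt 2 * sum_f_R0 (fun k => Binomial.C (4 * k) (2 * k) / ((4 * INR k - 1) * 16 ^ k)) r).
Proof.
  change (sin_pow_sin_half_integral (2 * r) = sin_pow_sin_half_closed_form r).
  induction r as [|m IH].
  - rewrite Nat.mul_0_r, sin_pow_sin_half_integral_0, sin_pow_sin_half_closed_form_0.
    reflexivity.
  - set (c := 4 * (INR (2 * m) + 2) ^ 2 - 1).
    assert (c_pos : 0 < c) by (assert (H := pos_INR (2 * m)); unfold c; nra).
    apply (Rmult_eq_reg_l c); [| lra].
    replace (2 * S m)%nat with (S (S (2 * m))) by lia.
    unfold c; rewrite sin_pow_sin_half_integral_reduction, IH.
    symmetry; apply sin_pow_sin_half_closed_form_reduction.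
Qed.
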